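(* No absolute prime has all four of the digits $1,3,7,9$ appearing in its decimal representation.
   Context: For a positive integer $N$ with decimal representation $d_1d_2\dots d_n$ (digits $d_k\in\{0,\dots,9\}$, $d_1\neq 0$), a permutation of the digits of $N$ is any integer $\sum_{k=1}^{n} d_{\sigma(k)}10^{n-k}$ with $\sigma$ a permutation of $\{1,\dots,n\}$. $N$ is called an absolute prime if every integer obtained by a permutation of the digits of $N$ (including $N$ itself) is prime. *)

From mathcomp Require Import all_boot.
Set Implicit Arguments. Unset Strict Implicit. Unset Printing Implicit Defensive.

(* Decimal digits of n, most significant first: [d_1; ...; d_n]; digits 0 = [::]. *)
Fixpoint digits_aux (fuel n : nat) : seq nat :=
  match fuel with
  | 0 => [::]
  | f.+1 => if n == 0 then [::] else rcons (digits_aux f (n %/ 10)) (n %% 10)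
  end.
Definition digits (n : nat) : seq nat := digits_aux n n.

Definition from_digits (s : seq nat) : nat := foldl (fun acc d => acc * 10 + d) 0 s.

(* N is an absolute prime: every integer obtained by permuting its digits
   (leading zeros allowed, as in the definition) is prime. *)
Definition absolute_prime (N : nat) : Prop :=
  0 < N /\ forall s : seq nat, perm_eq s (digits N) -> prime (from_digits s).

From mathcomp Require Import all_boot.
From mathcomp Require Import zify.

(* The value of a digit string t ++ p is from_digits t * 10^|p| + from_digits p.
   The arrangements of the digits 1, 3, 7, 9 take all seven residues modulo 7:
   1379, 1793, 3719, 1739, 1397, 1937, 1973 are 0, 1, ..., 6 mod 7.  If N has the
   digits 1, 3, 7, 9, its digit list is a permutation of [:: 1; 3; 7; 9] ++ t;
   appending to t an arrangement p of 1, 3, 7, 9 with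
   from_digits p = - from_digits t * 10^4 (mod 7) gives a permutation of the
   digits of N whose value is a multiple of 7 larger than 7, hence not prime. *)

Lemma foldl_digits_shift (b : seq nat) (x : nat) :
  foldl (fun acc d => acc * 10 + d) x b =
  x * 10 ^ size b + foldl (fun acc d => acc * 10 + d) 0 b.
Proof.
elim: b x => [|d b IH] x /=; first by rewrite expn0 muln1 addn0.
rewrite IH [in RHS]IH add0n expnS; lia.
Qed.

Lemma from_digits_cat (a b : seq nat) :
  from_digits (a ++ b) = from_digits a * 10 ^ size b + from_digits b.
Proof. by rewrite /from_digits foldl_cat foldl_digits_shift. Qed.

Lemma perm_cat_of_subset (T : eqType) (u s : seq T) :
  uniq u -> {subset u <= s} -> exists t, perm_eq s (u ++ t).
Proof.
move=> uniq_u sub_us.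
have [s' sub_s' perm_us'] : exists2 s', subseq s' s & perm_eq u s'.
  apply/count_subseqP => x; rewrite count_uniq_mem //.
  case: (boolP (x \in u)) => // /sub_us x_s.
  by rewrite -has_pred1 has_count in x_s.
have [t perm_st] := perm_to_subseq sub_s'.
exists t; apply: (perm_trans perm_st).
by rewrite perm_cat2r perm_sym.
Qed.

Lemma arrangement_1379_residue (r : nat) : r < 7 ->
  exists p, [/\ perm_eq p [:: 1; 3; 7; 9], size p = 4,
                from_digits p %% 7 = r & 7 < from_digits p].
Proof.
case: r => [|[|[|[|[|[|[|r]]]]]]] _ //.
- by exists [:: 1; 3; 7; 9]; split.
- by exists [:: 1; 7; 9; 3]; split.
- by exists [:: 3; 7; 1; 9]; split.
- by exists [:: 1; 7; 3; 9]; split.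
- by exists [:: 1; 3; 9; 7]; split.
- by exists [:: 1; 9; 3; 7]; split.
- by exists [:: 1; 9; 7; 3]; split.
Qed.

Lemma arrangement_1379_multiple_of_7 (t : seq nat) :
  exists p, perm_eq p [:: 1; 3; 7; 9] /\
            7 %| from_digits (t ++ p) /\ 7 < from_digits (t ++ p).
Proof.
set T := from_digits t * 10 ^ 4.
have [p [perm_p size_p res_p big_p]] :=
  arrangement_1379_residue _ (ltn_pmod (7 - T %% 7) (isT : 0 < 7)).
exists p; split=> //; rewrite from_digits_cat size_p -/T; split; lia.
Qed.

Theorem lemma2 (N : nat) :
  absolute_prime N ->
  ~ [/\ 1 \in digits N, 3 \in digits N, 7 \in digits N & 9 \in digits N].
Proof.
move=> [_ perm_prime] [d1 d3 d7 d9].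
have [t perm_Nt] : exists t, perm_eq (digits N) ([:: 1; 3; 7; 9] ++ t).
  apply: perm_cat_of_subset => // d; rewrite !inE.
  by case/or4P => /eqP ->.
have [p [perm_p [div7 gt7]]] := arrangement_1379_multiple_of_7 t.
have perm_tp : perm_eq (t ++ p) (digits N).
  rewrite perm_sym (perm_trans perm_Nt) // perm_catC perm_cat2l perm_sym //.
have := prime_nt_dvdP (perm_prime _ perm_tp) (isT : 7 != 1) div7.
by move=> eq7; rewrite -eq7 ltnn in gt7.
Qed.
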